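(* Let $n\ge 2$ and let $\mathrm{Rect}^\ast(n)=\{(a^b):ab=n,\ a,b\ge 2\}$. Then: (1) $\mathrm{Rect}^\ast(n)\cap \mathcal M_n=\varnothing$; (2) if $n$ is even and $n\ge 4$, then $\mathrm{Rect}^\ast(n)\cap \mathcal L_n=\{(n/2,n/2)\}$ and $\mathrm{Rect}^\ast(n)\cap \mathcal R_n=\{(2^{n/2})\}$; if $n=2$ or $n$ is odd, both intersections are empty; (3) $\mathrm{Rect}^\ast(n)\cap Ax_n=\{(a^a)\}$ if $n=a^2$ is a square, and $\mathrm{Rect}^\ast(n)\cap Ax_n=\varnothing$ otherwise; (4) $\mathrm{Rect}^\ast(n)\subset D_2(n)\cap L_2(n)$.
   Context: The partition graph $G_n$ has as vertices the integer partitions of $n$; two partitions are adjacent if one is obtained from the other by a single elementary unit transfer followed by reordering: decrease one part by $1$ and either increase a different part by $1$ or create a new part equal to $1$, then delete a part that became $0$ and sort in nonincreasing order (the result being different from the original). $(a^b)$ denotes $b$ parts equal to $a$. The main chain is $\mathcal M_n=\{(n-k,1^k):0\le k\le n-1\}$; the left edge is $\mathcal L_n=\{(n-k,k):1\le k\le\lfloor n/2\rfloor\}$; the right edge $\mathcal R_n$ is the set of conjugates of the partitions in $\mathcal L_n$ (conjugation = transposing the Ferrers diagram). $Ax_n$ is the set of self-conjugate partitions of $n$. $D_d(n)$ is the set of vertices of $G_n$ of degree $d$. The local simplex dimension of a vertex $v$ is $m-1$ where $m$ is the largest size of a clique of $G_n$ containing $v$; $L_r(n)$ is the set of vertices of local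 simplex dimension $r$. *)

From mathcomp Require Import all_boot.
Set Implicit Arguments. Unset Strict Implicit. Unset Printing Implicit Defensive.

Definition is_part (n : nat) (s : seq nat) : bool :=
  [&& sorted geq s, all (fun x => 0 < x) s & sumn s == n].

Definition rect (a b : nat) : seq nat := nseq b a.

Definition inRect (n : nat) (s : seq nat) : Prop :=
  exists a b, [/\ a * b = n, 2 <= a, 2 <= b & s = rect a b].

Definition conj_part (s : seq nat) : seq nat :=
  [seq count (fun x => i < x) s | i <- iota 0 (head 0 s)].

Definition inM (n : nat) (s : seq nat) : Prop :=
  exists k, k <= n - 1 /\ s = (n - k) :: nseq k 1.

Definition inLeft (n : nat) (s : seq nat) : Prop :=
  exists k, [/\ 1 <= k, k <= n./2 & s = [:: n - k; k]].

Definition inRight (n : nat) (s : seq nat) : Prop :=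
  exists t, inLeft n t /\ s = conj_part t.

Definition inAx (n : nat) (s : seq nat) : Prop :=
  is_part n s /\ conj_part s = s.

(* One elementary unit transfer from p giving q: decrease part i by 1,
   increase a different part j by 1 (j < size p) or create a new part 1
   (j = size p), delete zero parts, sort nonincreasingly; result differs. *)
Definition transfer (p q : seq nat) : bool :=
  [exists i : 'I_(size p), exists j : 'I_(size p).+1,
    [&& (i : nat) != j, 1 <= nth 0 p i,
        q == sort geq [seq x <- incr_nth (set_nth 0 p i (nth 0 p i).-1) j | 0 < x]
      & q != p]].

Definition adj (p q : seq nat) : bool := transfer p q || transfer q p.

(* Finite encoding of the vertices of G_n: every partition of n has at most
   n parts, each at most n, so it is uniquely encoded by the nonincreasing
   n-tuple obtained by padding with zeros. *)
Definition code (n : nat) := (n.-tuple 'I_n.+1)%type.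

Definition decode (n : nat) (c : code n) : seq nat :=
  [seq x <- map val c | 0 < x].

Definition Vtx (n : nat) : {set code n} :=
  [set c : code n | is_part n (decode c) && sorted geq (map val c)].

Definition degree (n : nat) (s : seq nat) : nat :=
  #|[set c in Vtx n | adj s (decode c)]|.

Definition inD (n d : nat) (s : seq nat) : Prop :=
  is_part n s /\ degree n s = d.

Definition is_clique (n : nat) (K : {set code n}) : Prop :=
  K \subset Vtx n /\
  forall c1 c2, c1 \in K -> c2 \in K -> c1 != c2 -> adj (decode c1) (decode c2).

Definition local_dim (n : nat) (s : seq nat) (r : nat) : Prop :=
  (exists K : {set code n},
      [/\ is_clique K, exists2 c, c \in K & decode c = s & #|K| = r.+1]) /\
  (forall K : {set code n},
      is_clique K -> (exists2 c, c \in K & decode c = s) -> #|K| <= r.+1).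

Definition inLdim (n r : nat) (s : seq nat) : Prop :=
  is_part n s /\ local_dim n s r.

From mathcomp Require Import all_boot zify.
Set Implicit Arguments. Unset Strict Implicit. Unset Printing Implicit Defensive.

(* All rows of a rectangle (a^b) are equal, so up to reordering a unit transfer
   out of it only depends on whether the unit lands on another row or starts a
   new one: its neighbours are (a+1, a^(b-2), a-1) and (a^(b-1), a-1, 1), and a
   multiset count shows that nothing else transfers into (a^b) either.  These two
   neighbours are adjacent, so the closed neighbourhood of (a^b) is a triangle,
   which gives degree 2 and local simplex dimension 2.  The remaining parts
   compare shapes: a rectangle with a, b >= 2 has no part 1, has two rows only as
   (n/2, n/2), has conjugate (b^a), and is self-conjugate exactly when a = b. *)

Lemma geq_trans : transitive geq.
Proof. by move=> y x z /= le_yx le_zy; apply: leq_trans le_zy le_yx. Qed.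

Lemma geq_total : total geq.
Proof. by move=> x y; rewrite /= orbC leq_total. Qed.

Lemma geq_anti : antisymmetric geq.
Proof. by move=> x y; rewrite /= andbC => /anti_leq. Qed.

Lemma sort_geq_id s t : sorted geq t -> perm_eq s t -> sort geq s = t.
Proof.
move=> sorted_t perm_st; apply: (sorted_eq geq_trans geq_anti).
- exact: sort_sorted geq_total s.
- exact: sorted_t.
- by rewrite perm_sort.
Qed.

Lemma path_geq_nseq a m t : path geq a t -> path geq a (nseq m a ++ t).
Proof. by elim: m => //= m IH /IH ->; rewrite leqnn. Qed.

Lemma sorted_rect a b : sorted geq (rect a b).
Proof. by rewrite /rect; case: b => //= b; rewrite -[nseq b a]cats0 path_geq_nseq. Qed.

Lemma perm_nseq (T : eqType) n (x : T) s : perm_eq (nseq n x) s -> s = nseq n x.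
Proof.
move=> perm_xs; have /all_pred1P -> : all (pred1 x) s.
  by rewrite -(perm_all _ perm_xs) all_pred1_nseq.
by rewrite -(perm_size perm_xs) size_nseq.
Qed.

Section DropIndices.

Variables (T : eqType) (x0 : T).

Definition drop_idx (s : seq T) (I : seq nat) : seq T :=
  [seq nth x0 s k | k <- iota 0 (size s) & k \notin I].

Lemma perm_iota_pick m I : uniq I -> all (gtn m) I ->
  perm_eq (iota 0 m) (I ++ [seq k <- iota 0 m | k \notin I]).
Proof.
move=> uniq_I /allP lt_I_m; apply: uniq_perm.
- exact: iota_uniq.
- rewrite cat_uniq uniq_I filter_uniq ?iota_uniq // andbT.
  by apply/hasPn => k; rewrite mem_filter => /andP[].
- move=> k; rewrite mem_cat mem_filter.
  by case: (boolP (k \in I)) => //= /lt_I_m; rewrite mem_iota /= => ->.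
Qed.

Lemma perm_pick_idx s I : uniq I -> all (gtn (size s)) I ->
  perm_eq s ([seq nth x0 s k | k <- I] ++ drop_idx s I).
Proof.
move=> uniq_I lt_I_s; rewrite -map_cat -{1}(mkseq_nth x0 s) /mkseq.
exact/perm_map/perm_iota_pick.
Qed.

Lemma eq_drop_idx s t I : size s = size t ->
  (forall k, k \notin I -> nth x0 s k = nth x0 t k) -> drop_idx s I = drop_idx t I.
Proof.
move=> eq_size eq_st; rewrite /drop_idx eq_size.
by apply/eq_in_map => k; rewrite mem_filter => /andP[/eq_st].
Qed.

Lemma drop_idx_nseq n x I : uniq I -> all (gtn n) I ->
  drop_idx (nseq n x) I = nseq (n - size I) x.
Proof.
move=> uniq_I lt_I_n.
have lt_I_size : all (gtn (size (nseq n x))) I by rewrite size_nseq.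
have /perm_nseq/(congr1 (drop (size I))) := perm_pick_idx uniq_I lt_I_size.
by rewrite drop_size_cat ?size_map // drop_nseq.
Qed.

End DropIndices.

Lemma incr_nth_size s : incr_nth s (size s) = rcons s 1.
Proof. by elim: s => //= x s ->. Qed.

Lemma perm_incr_set_nth p i j v : i < size p -> j < size p -> i != j ->
  perm_eq (incr_nth (set_nth 0 p i v) j)
          (v :: (nth 0 p j).+1 :: drop_idx 0 p [:: i; j]).
Proof.
move=> lt_i lt_j neq_ij; set r := incr_nth _ j.
have size_r : size r = size p.
  by rewrite size_incr_nth size_set_nth (maxn_idPr lt_i) lt_j.
have nth_r k : nth 0 r k = if k == i then v else (nth 0 p k + (k == j)).
  rewrite nth_incr_nth nth_set_nth /= eq_sym addnC; case: eqVneq => [->|//].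
  by rewrite (negbTE neq_ij) addn0.
apply: perm_trans (perm_pick_idx 0 (I := [:: i; j]) _ _) _.
- by rewrite /= inE neq_ij.
- by rewrite /= size_r lt_i lt_j.
rewrite /= !nth_r eqxx eq_sym (negbTE neq_ij) eqxx addn1.
rewrite (eq_drop_idx (t := p)) // => k; rewrite !inE negb_or nth_r.
by case/andP => /negbTE -> /negbTE ->; rewrite addn0.
Qed.

Lemma perm_incr_set_nth_new p i v : i < size p ->
  perm_eq (incr_nth (set_nth 0 p i v) (size p)) (1 :: v :: drop_idx 0 p [:: i]).
Proof.
move=> lt_i; set t := set_nth 0 p i v.
have size_t : size t = size p by rewrite size_set_nth (maxn_idPr lt_i).
rewrite -size_t incr_nth_size perm_rcons perm_cons.
apply: perm_trans (perm_pick_idx 0 (I := [:: i]) _ _) _; first by [].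
  by rewrite /= size_t lt_i.
rewrite /= nth_set_nth /= eqxx (eq_drop_idx (t := p)) // => k.
by rewrite inE nth_set_nth /= => /negbTE ->.
Qed.

Definition move_unit (p : seq nat) (i j : nat) : seq nat :=
  sort geq [seq x <- incr_nth (set_nth 0 p i (nth 0 p i).-1) j | 0 < x].

Lemma transferP p q : reflect
  (exists i j, [/\ i < size p, j <= size p, i != j, 0 < nth 0 p i &
                   q = move_unit p i j /\ q != p])
  (transfer p q).
Proof.
apply: (iffP existsP).
- case=> i /existsP[j /and4P[neq_ij pos_i /eqP -> neq_qp]].
  by exists i, j; split; rewrite // -ltnS.
- case=> i [j [lt_i le_j neq_ij pos_i [-> neq_qp]]].
  exists (Ordinal lt_i); apply/existsP.
  by exists (Ordinal (le_j : j < (size p).+1)); rewrite /= neq_ij pos_i eqxx.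
Qed.

Lemma adjC p q : adj p q = adj q p.
Proof. by rewrite /adj orbC. Qed.

Lemma adj_irr p : adj p p = false.
Proof.
by rewrite /adj orbb; apply/negbTE/negP => /transferP[i [j [_ _ _ _ [_ /eqP]]]].
Qed.

Definition rect_shift (a b : nat) : seq nat := a.+1 :: nseq (b - 2) a ++ [:: a.-1].
Definition rect_newrow (a b : nat) : seq nat := nseq (b - 1) a ++ [:: a.-1; 1].

Section RectangleNeighbours.

Variables a b : nat.
Hypothesis a_gt1 : 1 < a.

Lemma sorted_rect_shift : sorted geq (rect_shift a b).
Proof.
by rewrite /rect_shift /= (path_le geq_trans (leqnSn a)) // path_geq_nseq //= andbT; lia.
Qed.

Lemma sorted_rect_newrow : sorted geq (rect_newrow a b).
Proof.
rewrite /rect_newrow; case: (b - 1) => [|m] /=; first by rewrite andbT; lia.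
by rewrite path_geq_nseq //= andbT; apply/andP; split; lia.
Qed.

Lemma perm_rect_shift : perm_eq (rect_shift a b) [:: a.+1, a.-1 & nseq (b - 2) a].
Proof. by rewrite /rect_shift perm_cons cats1 perm_rcons. Qed.

Lemma perm_rect_newrow : perm_eq (rect_newrow a b) [:: 1, a.-1 & nseq (b - 1) a].
Proof.
rewrite /rect_newrow perm_catC; apply/permPl.
exact: (perm_catCA [:: a.-1] [:: 1]).
Qed.

Lemma move_unit_rect i j : i < b -> j <= b -> i != j ->
  move_unit (rect a b) i j = if j < b then rect_shift a b else rect_newrow a b.
Proof.
move=> lt_i le_j neq_ij; rewrite /move_unit /rect nth_nseq lt_i.
have lt_i' : i < size (nseq b a) by rewrite size_nseq.
have pos_a : 0 < a by lia.
have pos_a1 : 0 < a.-1 by lia.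
case: ltnP => [lt_j | ge_j].
- have lt_j' : j < size (nseq b a) by rewrite size_nseq.
  apply: sort_geq_id; first exact: sorted_rect_shift.
  apply: perm_trans (perm_filter _ (perm_incr_set_nth _ lt_i' lt_j' neq_ij)) _.
  rewrite drop_idx_nseq /= ?inE ?neq_ij ?lt_i ?lt_j // nth_nseq lt_j.
  rewrite pos_a1 filter_nseq pos_a mul1n perm_sym (permPl perm_rect_shift).
  by apply/permPl; exact: (perm_catCA [:: a.+1] [:: a.-1]).
- have -> : j = b by apply/anti_leq/andP.
  apply: sort_geq_id; first exact: sorted_rect_newrow.
  have := perm_incr_set_nth_new a.-1 lt_i'; rewrite size_nseq.
  move=> /(perm_filter (fun x => 0 < x))/perm_trans; apply.
  by rewrite drop_idx_nseq /= ?lt_i // pos_a1 filter_nseq pos_a mul1n perm_sym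
    (permPl perm_rect_newrow).
Qed.

End RectangleNeighbours.

(* Moving the unit gives the parts q_i - 1, q_j + 1 and the untouched ones; for
   this to be (a^b) we need q_j = a - 1, q_i in {1, a + 1}, and no new part 1. *)
Lemma move_unit_eq_rect a b q i j : 1 < a ->
  sorted geq q -> all (fun x => 0 < x) q ->
  i < size q -> j <= size q -> i != j -> 0 < nth 0 q i ->
  rect a b = move_unit q i j -> q = rect_shift a b \/ q = rect_newrow a b.
Proof.
move=> a_gt1 sorted_q pos_q lt_i le_j neq_ij pos_i eq_rect.
set v := (nth 0 q i).-1.
have {eq_rect} perm_r : perm_eq (nseq b a) [seq x <- incr_nth (set_nth 0 q i v) j | 0 < x].
  by rewrite -[nseq b a]/(rect a b) eq_rect perm_sort.
case: (ltnP j (size q)) => [lt_j | ge_j]; last first.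
  have j_eq : j = size q by apply/anti_leq/andP.
  move: perm_r; rewrite j_eq => /perm_trans.
  move=> /(_ _ (perm_filter _ (perm_incr_set_nth_new v lt_i))).
  by case: b => [|b'] /perm_nseq //= [a_eq1]; rewrite -a_eq1 in a_gt1.
have perm_q : perm_eq q ([:: nth 0 q i; nth 0 q j] ++ drop_idx 0 q [:: i; j]).
  by apply: (perm_pick_idx 0 (I := [:: i; j])); rewrite /= ?inE ?neq_ij ?lt_i ?lt_j.
have pos_R : all (fun x => 0 < x) (drop_idx 0 q [:: i; j]).
  by move: pos_q; rewrite (perm_all _ perm_q) => /and3P[].
move/perm_trans: perm_r => /(_ _ (perm_filter _ (perm_incr_set_nth v lt_i lt_j neq_ij))).
rewrite /= (all_filterP pos_R); case: posnP => [v0 | v_pos] /perm_nseq.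
- case: b => [|b'] //= [qj_eq R_eq]; right.
  apply: (sorted_eq geq_trans geq_anti) => //; first exact: sorted_rect_newrow.
  apply: perm_trans perm_q _; rewrite perm_sym (permPl (perm_rect_newrow _ _)).
  have -> : nth 0 q i = 1 by rewrite /v in v0; lia.
  have -> : nth 0 q j = a.-1 by lia.
  by rewrite subSS subn0 R_eq.
- case: b => [|[|b']] //= [v_eq qj_eq R_eq]; left.
  apply: (sorted_eq geq_trans geq_anti) => //; first exact: sorted_rect_shift.
  apply: perm_trans perm_q _; rewrite perm_sym (permPl (perm_rect_shift _ _)).
  have -> : nth 0 q i = a.+1 by rewrite /v in v_eq; lia.
  have -> : nth 0 q j = a.-1 by lia.
  by rewrite !subSS subn0 R_eq.
Qed.

Lemma size_rect_shift a b : 1 < b -> size (rect_shift a b) = b.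
Proof. by move=> b_gt1; rewrite /= size_cat size_nseq /=; lia. Qed.

Lemma size_rect_newrow a b : 0 < b -> size (rect_newrow a b) = b.+1.
Proof. by move=> b_gt0; rewrite size_cat size_nseq /=; lia. Qed.

Lemma part_rect a b : 0 < a -> is_part (a * b) (rect a b).
Proof. by move=> a_gt0; rewrite /is_part sorted_rect all_nseq a_gt0 orbT sumn_nseq eqxx. Qed.

Lemma part_rect_shift a b : 1 < a -> 1 < b -> is_part (a * b) (rect_shift a b).
Proof.
move=> a_gt1 b_gt1; rewrite /is_part sorted_rect_shift //=.
rewrite all_cat all_nseq sumn_cat sumn_nseq /=; apply/andP; split; first lia.
by apply/eqP; rewrite -[in RHS](subnKC b_gt1); lia.
Qed.

Lemma part_rect_newrow a b : 1 < a -> 0 < b -> is_part (a * b) (rect_newrow a b).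
Proof.
move=> a_gt1 b_gt0; rewrite /is_part sorted_rect_newrow //=.
rewrite all_cat all_nseq sumn_cat sumn_nseq /=; apply/andP; split; first lia.
by apply/eqP; rewrite -[in RHS](subnKC b_gt0); lia.
Qed.

Lemma adj_rect a b q : 1 < a -> 1 < b -> sorted geq q -> all (fun x => 0 < x) q ->
  adj (rect a b) q = (q == rect_shift a b) || (q == rect_newrow a b).
Proof.
move=> a_gt1 b_gt1 sorted_q pos_q; have b_gt0 : 0 < b by lia.
have size_ab : size (rect a b) = b by rewrite size_nseq.
apply/idP/idP.
- case/orP => /transferP[i [j [lt_i le_j neq_ij pos_i [eq_q _]]]].
  + rewrite eq_q size_ab in lt_i le_j *; rewrite move_unit_rect //.
    by case: ifP; rewrite eqxx ?orbT.
  + by case: (move_unit_eq_rect a_gt1 sorted_q pos_q lt_i le_j neq_ij pos_i eq_q) => ->;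
      rewrite eqxx ?orbT.
- have pos_0 : 0 < nth 0 (rect a b) 0 by rewrite nth_nseq; case: ifP => //; lia.
  case/orP => /eqP ->; apply/orP; left; apply/transferP.
  + exists 0, 1; rewrite size_ab (move_unit_rect a_gt1 b_gt0 (ltnW b_gt1)) // b_gt1.
    split => //; split => //.
    by apply/eqP => /(congr1 (nth 0 ^~ 0)); rewrite /rect /= nth_nseq b_gt0; lia.
  + exists 0, b; rewrite size_ab (move_unit_rect a_gt1 b_gt0 (leqnn b)) ?ltnn; last lia.
    split => //; try lia; split => //.
    by apply/eqP => /(congr1 size); rewrite size_ab size_rect_newrow //; lia.
Qed.

Lemma transfer_shift_newrow a b : 1 < a -> 1 < b ->
  transfer (rect_shift a b) (rect_newrow a b).
Proof.
move=> a_gt1 b_gt1; apply/transferP; exists 0, b.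
rewrite size_rect_shift //; split => //; try lia; split; last first.
  by apply/eqP => /(congr1 size); rewrite size_rect_shift ?size_rect_newrow //; lia.
have size_b : size (a :: nseq (b - 2) a ++ [:: a.-1]) = b by rewrite /= size_cat size_nseq /=; lia.
rewrite /move_unit /= -[X in incr_nth _ X]size_b incr_nth_size.
have -> : rcons (a :: nseq (b - 2) a ++ [:: a.-1]) 1 = rect_newrow a b.
  by rewrite /rect_newrow -cats1 /= -catA (_ : b - 1 = (b - 2).+1) //; lia.
have /and3P[sorted_newrow pos_newrow _] := part_rect_newrow a_gt1 (ltnW b_gt1).
by rewrite (all_filterP pos_newrow) sorted_sort //; exact: geq_trans.
Qed.

Lemma part_size_le n q : is_part n q -> size q <= n /\ all (fun x => x <= n) q.
Proof.
case/and3P => _ + /eqP <-; elim: q => //= x q IH /andP[x_gt0 /IH[size_q le_q]].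
split; first lia.
by rewrite leq_addr; apply/allP => y /(allP le_q); lia.
Qed.

Definition encode n (q : seq nat) : code n := [tuple inord (nth 0 q k) | k < n].

Lemma val_encode n q : is_part n q -> map val (encode n q) = q ++ nseq (n - size q) 0.
Proof.
move=> /part_size_le[size_q /allP le_q]; apply: (@eq_from_nth _ 0).
  by rewrite size_map size_tuple size_cat size_nseq; lia.
move=> k; rewrite size_map size_tuple => lt_k.
rewrite (nth_map ord0) ?size_tuple // -[k]/(nat_of_ord (Ordinal lt_k)) nth_mktuple /=.
rewrite inordK; last first.
  case: (ltnP k (size q)) => [lt_kq | ge_kq]; last by rewrite nth_default.
  exact: le_q (mem_nth 0 lt_kq).
by rewrite nth_cat; case: ltnP => // ge_k; rewrite nth_default // nth_nseq; case: ifP.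
Qed.

Lemma sorted_geq_pad q m : sorted geq q -> sorted geq (q ++ nseq m 0).
Proof.
case: q => [_|x q]; first exact: sorted_rect 0 m.
rewrite /= cat_path => -> /=.
by rewrite -[nseq m 0]cats0 (path_le geq_trans (leq0n _)) // path_geq_nseq.
Qed.

Lemma sorted_geq_split s : sorted geq s ->
  s = [seq x <- s | 0 < x] ++ nseq (size s - size [seq x <- s | 0 < x]) 0.
Proof.
elim: s => //= x s IH sorted_xs; have /IH {1}-> := path_sorted sorted_xs.
case: x sorted_xs => [|x] //= sorted_xs; rewrite ?subSS //.
have /all_pred1P -> : all (pred1 0) s.
  by apply/allP => y /(allP (order_path_min geq_trans sorted_xs)); rewrite /= leqn0.
by rewrite filter_nseq subn0.
Qed.

Lemma encode_Vtx n q : is_part n q -> encode n q \in Vtx n.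
Proof.
move=> part_q; rewrite inE /decode val_encode // filter_cat filter_nseq /= cats0.
by rewrite (all_filterP _) ?part_q ?sorted_geq_pad //; case/and3P: part_q.
Qed.

Lemma decode_encode n q : is_part n q -> decode (encode n q) = q.
Proof.
move=> part_q; rewrite /decode val_encode // filter_cat filter_nseq /= cats0.
by apply/all_filterP; case/and3P: part_q.
Qed.

Lemma decode_inj n : {in Vtx n &, injective (@decode n)}.
Proof.
move=> c c'; rewrite !inE => /andP[_ sorted_c] /andP[_ sorted_c'] eq_cc'.
apply/val_inj/(inj_map val_inj).
rewrite (sorted_geq_split sorted_c) (sorted_geq_split sorted_c') !size_map !size_tuple.
by rewrite -[filter _ _]/(decode c) -[filter _ (map _ c')]/(decode c') eq_cc'.
Qed.

Section TriangleNeighbourhood.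

Variables (n : nat) (s : seq nat) (c1 c2 : code n).
Hypotheses (part_s : is_part n s) (c1_V : c1 \in Vtx n) (c2_V : c2 \in Vtx n).
Hypotheses (neq_c12 : c1 != c2) (adj_c12 : adj (decode c1) (decode c2)).
Hypothesis nbhd_s : forall c, c \in Vtx n -> adj s (decode c) = (c == c1) || (c == c2).

Lemma degree_triangle : degree n s = 2.
Proof.
rewrite /degree (_ : [set c in Vtx n | _] = [set c1; c2]) ?cards2 ?neq_c12 //.
apply/setP => c; rewrite in_set in_set2; case c_V: (c \in Vtx n); first by rewrite nbhd_s.
by apply/esym/negbTE; apply: contraFN c_V => /orP[] /eqP ->.
Qed.

Lemma local_dim_triangle : local_dim n s 2.
Proof.
set c0 := encode n s; have c0_V : c0 \in Vtx n := encode_Vtx part_s.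
have dec_c0 : decode c0 = s := decode_encode part_s.
have c0_notin : c0 \notin [set c1; c2].
  by rewrite !inE -nbhd_s // dec_c0 adj_irr.
have adj01 : adj (decode c0) (decode c1) by rewrite dec_c0 nbhd_s ?eqxx.
have adj02 : adj (decode c0) (decode c2) by rewrite dec_c0 nbhd_s ?eqxx ?orbT.
split.
- exists (c0 |: [set c1; c2]); split.
  + split; first by apply/subsetP => c /setU1P[->|/set2P[]->].
    move=> d d' /setU1P[->|/set2P[]->] /setU1P[->|/set2P[]->]; rewrite ?eqxx // => _;
      by rewrite ?adj01 ?adj02 ?adj_c12 // adjC ?adj01 ?adj02 ?adj_c12.
  + by exists c0; rewrite ?setU11.
  + by rewrite cardsU1 c0_notin cards2 neq_c12.
- move=> K [K_V clique_K] [c c_K dec_c].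
  apply: leq_trans (subset_leq_card (_ : K \subset c |: [set c1; c2])) _.
    apply/subsetP => d d_K; rewrite in_setU1 in_set2; case: eqVneq => //= neq_dc.
    by rewrite -nbhd_s ?(subsetP K_V) // -dec_c clique_K // eq_sym.
  by rewrite cardsU1 cards2; case: (_ \notin _); case: (_ != _).
Qed.

End TriangleNeighbourhood.

Lemma rect_degree_local_dim a b : 1 < a -> 1 < b ->
  inD (a * b) 2 (rect a b) /\ inLdim (a * b) 2 (rect a b).
Proof.
move=> a_gt1 b_gt1; have part_ab := part_rect b (ltnW a_gt1).
have part_shift := part_rect_shift a_gt1 b_gt1.
have part_newrow := part_rect_newrow a_gt1 (ltnW b_gt1).
set c1 := encode (a * b) (rect_shift a b); set c2 := encode (a * b) (rect_newrow a b).
have [dec_c1 dec_c2] := (decode_encode part_shift, decode_encode part_newrow).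
have [c1_V c2_V] := (encode_Vtx part_shift, encode_Vtx part_newrow).
have neq_c12 : c1 != c2.
  apply/eqP => /(congr1 (fun c => size (decode c))).
  by rewrite dec_c1 dec_c2 size_rect_shift ?size_rect_newrow //; lia.
have adj_c12 : adj (decode c1) (decode c2) by rewrite dec_c1 dec_c2 /adj transfer_shift_newrow.
have nbhd c : c \in Vtx (a * b) -> adj (rect a b) (decode c) = (c == c1) || (c == c2).
  move=> c_V; have /and3P[sorted_c pos_c _] : is_part (a * b) (decode c).
    by move: c_V; rewrite inE => /andP[].
  by rewrite adj_rect // -dec_c1 -dec_c2 !(inj_in_eq (@decode_inj _)).
split; split => //; [exact: degree_triangle nbhd | exact: local_dim_triangle nbhd].
Qed.

Lemma map_iota_const (f : nat -> nat) m n c :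
  (forall i, m <= i < m + n -> f i = c) -> map f (iota m n) = nseq n c.
Proof.
move=> f_c; have /all_pred1P -> : all (pred1 c) (map f (iota m n)).
  by apply/allP => x /mapP[i]; rewrite mem_iota => /f_c fi_c ->; rewrite /= fi_c.
by rewrite size_map size_iota.
Qed.

Lemma conj_rect a b : 0 < b -> conj_part (rect a b) = rect b a.
Proof.
case: b => // b _; rewrite /conj_part /=; apply: map_iota_const => i /andP[_ lt_ia].
by rewrite /= count_nseq lt_ia mul1n.
Qed.

Lemma conj_two_rows m k : k <= m -> conj_part [:: m; k] = nseq k 2 ++ nseq (m - k) 1.
Proof.
move=> le_km; rewrite /conj_part /= -{2}(subnKC le_km) iotaD map_cat.
by congr (_ ++ _); apply: map_iota_const => i /andP[]; lia.
Qed.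

Lemma rect_notin_main n s : inRect n s -> ~ inM n s.
Proof.
case=> a [b [_ a_gt1 b_gt1 ->]] [k [_ /(congr1 (nth 0 ^~ 1))]].
by rewrite /rect /= !nth_nseq b_gt1; case: ifP; lia.
Qed.

Lemma inLeft_half n : ~~ odd n -> 0 < n -> inLeft n [:: n./2; n./2].
Proof. by move=> even_n n_gt0; exists n./2; split; try congr [:: _; _]; lia. Qed.

Lemma rect_left n s :
  inRect n s /\ inLeft n s <-> [/\ ~~ odd n, 4 <= n & s = [:: n./2; n./2]].
Proof.
split.
- case=> [[a [b [eq_n a_gt1 b_gt1 ->]]] [k [k_gt0 le_k eq_s]]].
  have b2 : b = 2 by have := congr1 size eq_s; rewrite size_nseq.
  by move: eq_s; rewrite b2 => -[eq_a eq_k]; split; try congr [:: _; _]; lia.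
- case=> even_n n_ge4 ->; split; last by apply: inLeft_half; lia.
  by exists n./2, 2; split => //; lia.
Qed.

Lemma rect_right n s :
  inRect n s /\ inRight n s <-> [/\ ~~ odd n, 4 <= n & s = nseq n./2 2].
Proof.
split.
- case=> [[a [b [eq_n a_gt1 b_gt1 ->]]] [t [[k [k_gt0 le_k ->]] eq_s]]].
  rewrite conj_two_rows in eq_s; last lia.
  have no_ones : n - k - k = 0.
    apply/eqP; rewrite eqn0Ngt; apply/negP => pos_ones.
    have : 1 \in rect a b by rewrite eq_s mem_cat !mem_nseq pos_ones eqxx orbT.
    by rewrite mem_nseq => /andP[_ /eqP a1]; lia.
  move: eq_s; rewrite no_ones cats0 => eq_s.
  have : 2 \in rect a b by rewrite eq_s mem_nseq k_gt0.
  rewrite mem_nseq => /andP[_ /eqP a2].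
  have bk : b = k by have := congr1 size eq_s; rewrite !size_nseq.
  by rewrite /rect -a2; split; try congr nseq; lia.
- case=> even_n n_ge4 ->; split; first by exists 2, n./2; split => //; lia.
  exists [:: n./2; n./2]; split; first by apply: inLeft_half; lia.
  by rewrite -[[:: _; _]]/(rect n./2 2) conj_rect.
Qed.

Lemma rect_ax n s :
  inRect n s /\ inAx n s <-> exists a, [/\ 1 < a, n = a * a & s = rect a a].
Proof.
split.
- case=> [[a [b [<- a_gt1 b_gt1 ->]]] [_ conj_s]].
  move: conj_s; rewrite conj_rect; last lia.
  by move=> /(congr1 size); rewrite !size_nseq => <-; exists a.
- case=> a [a_gt1 -> ->]; split; first by exists a, a.
  by split; [apply: part_rect; lia | apply: conj_rect; lia].
Qed.

Theorem proposition3p9 (n : nat) (hn : 2 <= n) :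
  (* (1) *)
  (forall s, ~ (inRect n s /\ inM n s)) /\
  (* (2) *)
  ((~~ odd n /\ 4 <= n) ->
     (forall s, inRect n s /\ inLeft n s <-> s = [:: n./2; n./2]) /\
     (forall s, inRect n s /\ inRight n s <-> s = nseq n./2 2)) /\
  ((n = 2 \/ odd n) ->
     (forall s, ~ (inRect n s /\ inLeft n s)) /\
     (forall s, ~ (inRect n s /\ inRight n s))) /\
  (* (3) *)
  (forall a, n = a * a ->
     forall s, inRect n s /\ inAx n s <-> s = nseq a a) /\
  ((~ exists a, n = a * a) -> forall s, ~ (inRect n s /\ inAx n s)) /\
  (* (4) *)
  (forall s, inRect n s -> inD n 2 s /\ inLdim n 2 s).
Proof.
split; [|split; [|split; [|split; [|split]]]].
- by move=> s [/rect_notin_main not_M /not_M].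
- case=> even_n n_ge4; split=> s.
  + by apply: iff_trans (rect_left n s) _; split=> [[_ _ ->] | ->].
  + by apply: iff_trans (rect_right n s) _; split=> [[_ _ ->] | ->].
- move=> n2_or_odd; split=> s.
  + by case/rect_left => even_n n_ge4 _; case: n2_or_odd => [|odd_n]; lia.
  + by case/rect_right => even_n n_ge4 _; case: n2_or_odd => [|odd_n]; lia.
- move=> a n_sq s; apply: iff_trans (rect_ax n s) _; split.
  + by case=> a' [_ sq_a' ->]; have -> : a' = a by nia.
  + by move=> ->; exists a; split => //; nia.
- by move=> not_sq s /rect_ax[a [_ sq_a _]]; apply: not_sq; exists a.
- by move=> s [a [b [<- a_gt1 b_gt1 ->]]]; apply: rect_degree_local_dim.
Qed.
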